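(* If $\Lambda$ is a quotient group of a group $\Gamma$, then $\mathrm{Lit}(\Lambda)\le\mathrm{Lit}(\Gamma)$.
   Context: $T_1(\Gamma)$ is the space of all $f\colon\Gamma\to\mathbf{C}$ for which there exist $f_1,f_2\colon\Gamma\times\Gamma\to\mathbf{C}$ with $f(x^{-1}y)=f_1(x,y)+f_2(x,y)$ for all $x,y$, $\sup_x\sum_y|f_1(x,y)|<\infty$, $\sup_y\sum_x|f_2(x,y)|<\infty$; $\mathrm{Lit}(\Gamma)=\inf\{p>0:T_1(\Gamma)\subseteq\ell^p(\Gamma)\}\in[0,\infty]$. *)

From mathcomp Require Import all_boot all_algebra all_classical all_reals all_analysis.
From mathcomp Require Import complex.
Import Normc.

Set Implicit Arguments.
Unset Strict Implicit.
Unset Printing Implicit Defensive.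

Local Open Scope classical_set_scope.
Local Open Scope ring_scope.

Record group_on (G : Type) := GroupOn {
  gmul : G -> G -> G;
  ginv : G -> G;
  gone : G;
  gmulA : forall x y z, gmul x (gmul y z) = gmul (gmul x y) z;
  gmul1g : forall x, gmul gone x = x;
  gmulVg : forall x, gmul (ginv x) x = gone
}.

Definition is_hom (G H : Type) (gG : group_on G) (gH : group_on H) (phi : G -> H) :=
  forall x y, phi (gmul gG x y) = gmul gH (phi x) (phi y).

(* Lambda is a quotient group of Gamma: there is a surjective homomorphism
   Gamma ->> Lambda (equivalently Lambda ≅ Gamma/N for a normal subgroup N). *)
Definition is_quotient_group (G H : Type) (gG : group_on G) (gH : group_on H) :=
  exists phi : G -> H, is_hom gG gH phi /\ forall h, exists g, phi g = h.

Definition T1 (R : realType) (G : choiceType) (gG : group_on G) (f : G -> R[i]) : Prop :=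
  exists (f1 f2 : G -> G -> R[i]),
    (forall x y, f (gmul gG (ginv gG x) y) = f1 x y + f2 x y) /\
    (exists M : R, forall x, (\esum_(y in setT) (normc (f1 x y))%:E <= M%:E)%E) /\
    (exists M : R, forall y, (\esum_(x in setT) (normc (f2 x y))%:E <= M%:E)%E).

Definition in_lp (R : realType) (G : choiceType) (p : R) (f : G -> R[i]) : Prop :=
  (\esum_(x in setT) ((normc (f x)) `^ p)%:E < +oo)%E.

(* Lit(Gamma) = inf { p > 0 : T_1(Gamma) ⊆ ell^p(Gamma) } in [0, +oo]
   (inf of the empty set is +oo). *)
Definition Lit (R : realType) (G : choiceType) (gG : group_on G) : \bar R :=
  ereal_inf [set (p%:E)%E | p in [set p : R | 0 < p /\
     (forall f : G -> R[i], T1 gG f -> in_lp p f)]].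

From mathcomp Require Import all_boot all_algebra all_classical all_reals all_analysis.
From mathcomp Require Import complex.

(* Choose a set-theoretic section [s] of the quotient map [phi : Γ ->> Λ] and
   pull each [f] in T_1(Λ) back to [f ∘ phi] restricted to the transversal
   [s(Λ)].  The kernels [f1], [f2] are pulled back the same way, restricted to
   the pairs with [x^-1 y] in [s(Λ)]; for fixed [x] (resp. [y]) the map [phi]
   is injective on those [y] (resp. [x]), so row and column sums do not grow.
   The pull-back has the same ℓ^p sums as [f], hence every exponent that works
   for Γ also works for Λ. *)

Import Normc.
Set Implicit Arguments.
Unset Strict Implicit.
Unset Printing Implicit Defensive.
Import order.Order.TTheory GRing.Theory Num.Theory.
Local Open Scope classical_set_scope.
Local Open Scope ring_scope.
Local Open Scope ereal_scope.

Lemma le_esum_inj (R : realType) (T T' : choiceType) (P : set T)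
    (a : T -> \bar R) (b : T' -> \bar R) (e : T -> T') :
  set_inj P e -> (forall t, ~ P t -> a t = 0) -> (forall t', 0 <= b t') ->
  (forall t, P t -> a t <= b (e t)) ->
  \esum_(t in setT) a t <= \esum_(t' in setT) b t'.
Proof.
move=> e_inj aP0 b0 ab.
have -> : \esum_(t in setT) a t = \esum_(t in P) a t.
  rewrite [RHS]esum_mkcond; apply: eq_esum => t _.
  by case: ifPn => // /negP; rewrite in_setE => /aP0.
apply: (@le_trans _ _ (\esum_(t in P) b (e t))); first exact: le_esum.
rewrite -(esum_image P e b e_inj) [X in X <= _]esum_mkcond.
by apply: le_esum => t' _; case: ifPn.
Qed.

Lemma normc_ge0 (R : rcfType) (z : R[i]) : (0 <= normc z)%R.
Proof. by case: z => a b; rewrite /normc sqrtr_ge0. Qed.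

Section GroupOn.
Variables (T : Type) (g : group_on T).

Lemma gmulgV x : gmul g x (ginv g x) = gone g.
Proof.
set y := ginv g x.
rewrite -[gmul g x y](gmul1g g) -(gmulVg g y) -gmulA (gmulA g y x y).
by rewrite /y gmulVg gmul1g gmulVg.
Qed.

Lemma gmulg1 x : gmul g x (gone g) = x.
Proof. by rewrite -(gmulVg g x) gmulA gmulgV gmul1g. Qed.

Lemma gmulgI x : injective (gmul g x).
Proof.
move=> a b eq_xab.
by rewrite -[a](gmul1g g) -[b](gmul1g g) -(gmulVg g x) -!gmulA eq_xab.
Qed.

Lemma gmulIg x : injective (gmul g^~ x).
Proof.
move=> a b /= eq_abx.
by rewrite -[a]gmulg1 -[b]gmulg1 -(gmulgV x) !gmulA eq_abx.
Qed.

Lemma ginv_uniq a b : gmul g a b = gone g -> a = ginv g b.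
Proof. by move=> ab1; apply: (@gmulIg b); rewrite ab1 gmulVg. Qed.

Lemma ginvK : involutive (ginv g).
Proof. by move=> x; apply/esym/ginv_uniq; rewrite gmulgV. Qed.

End GroupOn.

Section Hom.
Variables (A B : Type) (gA : group_on A) (gB : group_on B) (phi : A -> B).
Hypothesis phi_hom : is_hom gA gB phi.

Lemma hom1 : phi (gone gA) = gone gB.
Proof. by apply: (@gmulgI _ gB (phi (gone gA))); rewrite -phi_hom gmul1g gmulg1. Qed.

Lemma homV x : phi (ginv gA x) = ginv gB (phi x).
Proof. by apply: ginv_uniq; rewrite -phi_hom gmulVg hom1. Qed.

Lemma hom_ldiv x y :
  phi (gmul gA (ginv gA x) y) = gmul gB (ginv gB (phi x)) (phi y).
Proof. by rewrite phi_hom homV. Qed.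

End Hom.

Section Pullback.
Variables (R : realType) (G L : choiceType) (gG : group_on G) (gL : group_on L).
Variables (phi : G -> L) (s : L -> G).
Hypotheses (phi_hom : is_hom gG gL phi) (phiK : cancel s phi).

Definition on_section (c : G) : bool := c == s (phi c).

Definition lift (f : L -> R[i]) (c : G) : R[i] :=
  if on_section c then f (phi c) else 0%R.

Definition lift2 (k : L -> L -> R[i]) (x y : G) : R[i] :=
  if on_section (gmul gG (ginv gG x) y) then k (phi x) (phi y) else 0%R.

Lemma on_section_inj : {in on_section &, injective phi}.
Proof. by move=> c c' /eqP Sc /eqP Sc' phi_cc'; rewrite Sc Sc' phi_cc'. Qed.

Lemma on_section_ldiv_injr x :
  set_inj [set y | on_section (gmul gG (ginv gG x) y)] phi.
Proof.
move=> y y' /set_mem Sy /set_mem Sy' phi_yy'; apply: (@gmulgI _ gG (ginv gG x)).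
by apply: on_section_inj => //; rewrite !(hom_ldiv phi_hom) phi_yy'.
Qed.

Lemma on_section_ldiv_injl y :
  set_inj [set x | on_section (gmul gG (ginv gG x) y)] phi.
Proof.
move=> x x' /set_mem Sx /set_mem Sx' phi_xx'.
rewrite -[x](ginvK gG) -[x'](ginvK gG); congr ginv; apply: (@gmulIg _ gG y).
by apply: on_section_inj => //; rewrite !(hom_ldiv phi_hom) phi_xx'.
Qed.

Lemma esum_lift2_row k x :
  \esum_(y in setT) (normc (lift2 k x y))%:E <=
  \esum_(y' in setT) (normc (k (phi x) y'))%:E.
Proof.
apply: (le_esum_inj (@on_section_ldiv_injr x)) => [y|y'|y].
- by rewrite /lift2 => /negP/negbTE ->; rewrite normc0.
- by rewrite lee_fin normc_ge0.
- by rewrite /= /lift2 => ->.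
Qed.

Lemma esum_lift2_col k y :
  \esum_(x in setT) (normc (lift2 k x y))%:E <=
  \esum_(x' in setT) (normc (k x' (phi y)))%:E.
Proof.
apply: (le_esum_inj (@on_section_ldiv_injl y)) => [x|x'|x].
- by rewrite /lift2 => /negP/negbTE ->; rewrite normc0.
- by rewrite lee_fin normc_ge0.
- by rewrite /= /lift2 => ->.
Qed.

Lemma T1_lift f : T1 gL f -> T1 gG (lift f).
Proof.
move=> [f1 [f2 [f_dec [[M1 row1] [M2 col2]]]]].
exists (lift2 f1), (lift2 f2); split; [|split].
- move=> x y; rewrite /lift /lift2; case: ifP => _; last by rewrite addr0.
  by rewrite (hom_ldiv phi_hom) f_dec.
- by exists M1 => x; apply: le_trans (row1 (phi x)); apply: esum_lift2_row.
- by exists M2 => y; apply: le_trans (col2 (phi y)); apply: esum_lift2_col.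
Qed.

Lemma in_lp_lift (p : R) f : in_lp p (lift f) -> in_lp p f.
Proof.
apply: le_lt_trans; apply: (@le_esum_inj _ _ _ setT _ _ s).
- by move=> l l' _ _ /(congr1 phi); rewrite !phiK.
- by move=> l /(_ I).
- by move=> c; rewrite lee_fin powR_ge0.
- by move=> l _; rewrite /lift /on_section phiK eqxx.
Qed.

End Pullback.

Lemma le_Lit (R : realType) (G L : choiceType) (gG : group_on G) (gL : group_on L) :
  (forall p : R, (0 < p)%R ->
    (forall f, T1 gG f -> in_lp p f) -> forall f, T1 gL f -> in_lp p f) ->
  Lit R gL <= Lit R gG.
Proof.
move=> transfer; apply: ereal_inf_le_tmp => _ [p [p0 lpG] <-].
by exists p => //; split => //; apply: transfer.
Qed.

Theorem proposition3p5 (R : realType) (G L : choiceType)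
  (gG : group_on G) (gL : group_on L) :
  is_quotient_group gG gL -> (Lit R gL <= Lit R gG)%E.
Proof.
move=> [phi [phi_hom phi_surj]].
have [s phiK] : {s : L -> G & cancel s phi} := boolp.choice phi_surj.
apply: le_Lit => p _ lpG f Tf.
apply: (in_lp_lift phiK); apply: lpG; exact: T1_lift.
Qed.
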